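(* Let $m\ge1$ divide $n$, let $\epsilon_m=e^{2\pi\sqrt{-1}/m}$ and $\Psi_m(X_0,\dots,X_{m-1})=\prod_{i\in(\mathbb Z/m\mathbb Z)^\times}\bigl(\sum_{j\in\mathbb Z/m\mathbb Z}\epsilon_m^{ij}X_j\bigr)$. Let $S_n$ act on $\mathbb C[X_0,\dots,X_{n-1}]$ by permuting the indices $\{0,\dots,n-1\}$ (i.e. $\sigma(X_j)=X_{\sigma(j)}$), and similarly $S_m$ on $\mathbb C[X_0,\dots,X_{m-1}]$. Let $Y_i=\sum_{j=0}^{n/m-1}X_{i+mj}$ for $0\le i\le m-1$. Then \[ \mathrm{Stab}\bigl(\Psi_m(Y_0,\dots,Y_{m-1})\bigr)=\mathrm{Stab}(\Psi_m)\wr S_{n/m}, \] where stabilizers are taken in $S_n$ and $S_m$ respectively.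
   Context: For a subgroup $G\le S_m$ (acting on $\{0,\dots,m-1\}$), $G\wr S_{n/m}$ denotes the subgroup of $S_n$ consisting of the permutations $(\sigma;\sigma_0,\dots,\sigma_{m-1})$ with $\sigma\in G$ and $\sigma_i\in S_{n/m}$ (acting on $\{0,\dots,n/m-1\}$), where $(\sigma;\sigma_0,\dots,\sigma_{m-1})$ maps $i+mj$ to $\sigma(i)+m\sigma_i(j)$ for $0\le i\le m-1$, $0\le j\le n/m-1$. $\mathrm{Stab}(F)$ denotes the set of permutations fixing the polynomial $F$. *)

From HB Require Import structures.
From mathcomp Require Import all_boot all_order all_algebra all_fingroup all_field.
From mathcomp Require Import mpoly.
Set Implicit Arguments. Unset Strict Implicit. Unset Printing Implicit Defensive.
Import GRing.Theory Num.Theory.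
Local Open Scope ring_scope.

(* eps_m = e^{2 pi i / m}: m.-root (-1) is the m-th root of -1 with minimal
   non-negative argument, i.e. e^{i pi / m}; its square is e^{2 pi i / m}. *)
Definition eps (m : nat) : algC := (m.-root (-1)) ^+ 2.

Definition Psi (m : nat) : {mpoly algC[m]} :=
  \prod_(i < m | coprime i m) \sum_(j < m) (eps m ^+ (i * j)) *: 'X_j.

(* Y_i = sum_{j=0}^{n/m-1} X_{i+mj}, i.e. the sum of X_k over the k < n with
   k = i mod m (for m | n). *)
Definition Y (m n : nat) (i : 'I_m) : {mpoly algC[n]} :=
  \sum_(k < n | (k %% m == i)%N) 'X_k.

Definition PsiY (m n : nat) : {mpoly algC[n]} :=
  Psi m \mPo (mktuple (fun i : 'I_m => @Y m n i)).

Definition Stab (k : nat) (F : {mpoly algC[k]}) : {set 'S_k} :=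
  [set s : 'S_k | msym s F == F].

Definition wreath (m n : nat) (G : {set 'S_m}) : {set 'S_n} :=
  [set s : 'S_n | [exists sig : 'S_m, exists tau : {ffun 'I_m -> 'S_(n %/ m)},
     (sig \in G) &&
     [forall i : 'I_m, forall j : 'I_(n %/ m), forall k : 'I_n,
        (val k == i + m * j)%N ==>
        (val (s k) == val (sig i) + m * val (tau i j))%N]]].

(* A permutation s fixing Psi_m(Y) preserves congruence mod m: evaluating
   Psi_m(Y) at X = e_k' - e_k gives prod_{i unit} (eps^(i k') - eps^(i k)),
   which vanishes iff k = k' (mod m) because eps_m is a primitive m-th root of
   unity.  So s permutes the residue classes through some sig in S_m, which is
   exactly membership in S_m wr S_(n/m); for such s, s(Psi_m(Y)) = (sig Psi_m)(Y),
   and the substitution X_i |-> Y_i is injective, so s fixes Psi_m(Y) iff sig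
   fixes Psi_m. *)

From mathcomp Require Import all_boot all_order all_algebra all_fingroup all_field.
From mathcomp Require Import mpoly ring.
Set Implicit Arguments. Unset Strict Implicit. Unset Printing Implicit Defensive.
Import Order.TTheory GRing.Theory Num.Theory.
Local Open Scope ring_scope.

Lemma sum_prim_root_expr (R : idomainType) q (w : R) l :
  q.-primitive_root w ->
  \sum_(j < q) (w ^+ l) ^+ j = if (q %| l)%N then q%:R else 0.
Proof.
move=> prim_w; rewrite (prim_order_dvd prim_w); case: eqP => [-> | /eqP wl_neq1].
  by rewrite (eq_bigr (fun=> 1)) => [|j _]; rewrite ?sumr_const ?card_ord ?expr1n.
have : (w ^+ l - 1) * \sum_(j < q) (w ^+ l) ^+ j = 0.
  by rewrite -subrX1 exprAC (prim_expr_order prim_w) expr1n subrr.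
by move/eqP; rewrite mulf_eq0 subr_eq0 (negbTE wl_neq1) => /eqP.
Qed.

Lemma sum_geom_prim_root_shifts (R : idomainType) q (w x : R) :
  q.-primitive_root w -> \sum_(j < q) \sum_(l < q) (x * w ^+ j) ^+ l = q%:R.
Proof.
move=> prim_w; rewrite exchange_big /=.
under eq_bigr do under eq_bigr do rewrite exprMn -exprM mulnC exprM.
under eq_bigr do rewrite -mulr_sumr (sum_prim_root_expr _ prim_w).
case: q prim_w => [/prim_order_gt0 // | q] _.
rewrite big_ord_recl dvdn0 expr0 mul1r big1 ?addr0 // => l _.
by rewrite /= gtnNdvd ?mulr0 // ltnS.
Qed.

Lemma prod_prim_root_diff_eq0 (R : idomainType) m (z : R) a b :
  m.-primitive_root z ->
  (\prod_(i < m | coprime i m) (z ^+ (i * a) - z ^+ (i * b)) == 0) =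
  (a == b %[mod m]).
Proof.
move=> prim_z; have m_gt0 := prim_order_gt0 prim_z.
apply/prodf_eq0/idP => [[i i_unit] | ab_eqmod].
  rewrite subr_eq0 !exprM -(prim_root_exp_coprime i prim_z) in i_unit *.
  by rewrite (eq_prim_root_expr i_unit).
exists (Ordinal (ltn_pmod 1 m_gt0)); first by rewrite /= coprime_modl coprime1n.
by rewrite subr_eq0 (eq_prim_root_expr prim_z) -modnMmr (eqP ab_eqmod) modnMmr.
Qed.

Lemma normC_subr1_sqr (x : algC) : `|x| = 1 -> `|x - 1| ^+ 2 = 2 - 2 * 'Re x.
Proof.
move=> x_unit; have conjxx : x^* * x = 1 by rewrite -normCKC x_unit expr1n.
rewrite normCKC rmorphB rmorph1 ReE.
transitivity (x^* * x - x^* - x + 1); first by ring.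
by rewrite conjxx; field.
Qed.

(* For a q-th root v of z, z - 1 = (v - 1) (1 + v + ... + v^(q-1)).  Over the
   q roots these geometric sums add up to q and are not all 1, so one of them
   has modulus > 1; that root v is closer to 1 than z on the unit circle. *)
Lemma exists_root_Re_gt q (z : algC) : (1 < q)%N -> `|z| = 1 -> z != 1 ->
  exists2 v, v ^+ q = z & 'Re z < 'Re v.
Proof.
move=> q_gt1 z_unit z_neq1; have q_gt0 := ltnW q_gt1.
have [w prim_w] := C_prim_root_exists q_gt0.
pose v (j : 'I_q) := q.-root z * w ^+ j.
pose g (x : algC) := \sum_(l < q) x ^+ l.
have vq j : v j ^+ q = z.
  by rewrite exprMn exprAC (prim_expr_order prim_w) expr1n mulr1 rootCK.
have z1E j : z - 1 = (v j - 1) * g (v j) by rewrite -subrX1 vq.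
have [j g_gt1] : exists j, 1 < `|g (v j)|.
  apply/existsP; apply: contraT => /existsPn g_le1.
  have g1 : forall j, true -> g (v j) = 1.
    apply: normC_sum_upper => [j _|].
      by rewrite real_leNgt ?normr_real ?real1 ?g_le1.
    by rewrite sum_geom_prim_root_shifts // sumr_const card_ord.
  have vE j : v j = z by apply: (addIr (-1)); rewrite (z1E j) g1 ?mulr1.
  have /eqP := vE (Ordinal q_gt1); rewrite -(vE (Ordinal q_gt0)) /v expr0 mulr1 expr1.
  rewrite -subr_eq0 -{2}[q.-root z]mulr1 -mulrBr mulf_eq0 rootC_eq0 //.
  rewrite subr_eq0 -[w]expr1 -(prim_order_dvd prim_w) dvdn1.
  by rewrite -normr_eq0 z_unit oner_eq0 /= => /eqP q1; rewrite q1 in q_gt1.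
have v_unit : `|v j| = 1.
  by apply/eqP; rewrite -(pexpr_eq1 q_gt0) // -normrX vq z_unit.
exists (v j) => //.
have : `|v j - 1| ^+ 2 < `|z - 1| ^+ 2.
  rewrite (z1E j) normrM exprMn ltr_pMr ?expr_gt1 // exprn_gt0 // normr_gt0 subr_eq0.
  by apply: contraNneq z_neq1 => vj1; rewrite -(vq j) vj1 expr1n.
by rewrite !normC_subr1_sqr // ltrD2l ltrN2 ltr_pM2l.
Qed.

Lemma Re_le_rootCN1 m (v : algC) :
  (0 < m)%N -> v ^+ m = -1 -> 'Re v <= 'Re (m.-root (-1)).
Proof.
move=> m_gt0 vm; have [Im_ge0 | Im_lt0] := boolP (0 <= 'Im v).
  exact: rootC_Re_max.
rewrite -Re_conj; apply: rootC_Re_max => //; first by rewrite -rmorphXn vm rmorphN1.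
rewrite Im_conj oppr_ge0 ltW // real_ltNge ?Creal_Im //.
Qed.

(* If eps m had order k < m then z := m.-root (-1) would satisfy z^k = -1, and
   an (m/k)-th root of z with larger real part would be an m-th root of -1
   beating z, contradicting rootC_Re_max. *)
Lemma prim_root_eps m : (0 < m)%N -> m.-primitive_root (eps m).
Proof.
move=> m_gt0; rewrite /eps; set z := m.-root (-1).
have zm : z ^+ m = -1 by rewrite rootCK.
have N1_neq1 : (-1 : algC) != 1 by rewrite eqNr oner_eq0.
have [k prim_k k_dvd_m] : {k | k.-primitive_root (z ^+ 2) & (k %| m)%N}.
  by apply: prim_order_exists; rewrite // exprAC zm sqrrN expr1n.
have [q mE] : exists q, m = (q * k)%N by exists (m %/ k)%N; rewrite divnK.
have zk : z ^+ k = -1.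
  have /eqP := prim_expr_order prim_k.
  rewrite exprAC sqrf_eq1 => /orP[/eqP zk1 | /eqP //].
  move: zm; rewrite mE mulnC exprM zk1 expr1n => /eqP.
  by rewrite eq_sym (negbTE N1_neq1).
case: (ltngtP q 1) => [q_lt1 | q_gt1 | q1]; last by rewrite mE q1 mul1n.
  by move: m_gt0; rewrite mE; case: q mE q_lt1.
have z_unit : `|z| = 1 by apply/eqP; rewrite -(pexpr_eq1 m_gt0) // -normrX zm normrN1.
have z_neq1 : z != 1 by apply: contra_neq N1_neq1; rewrite -zk => ->; rewrite expr1n.
have [v vq Re_lt] := exists_root_Re_gt q_gt1 z_unit z_neq1.
have vm : v ^+ m = -1 by rewrite mE exprM vq zk.
by have := Re_le_rootCN1 m_gt0 vm; rewrite real_leNgt ?Creal_Re ?Re_lt.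
Qed.

Section MPolyComp.
Variable R : comRingType.

Lemma comp_mpolyA n k l (p : {mpoly R[n]}) (t : n.-tuple {mpoly R[k]})
    (u : k.-tuple {mpoly R[l]}) :
  (p \mPo t) \mPo u = p \mPo [tuple tnth t i \mPo u | i < n].
Proof.
rewrite [p \mPo t]comp_mpolyEX [in RHS](mpolyE p) !raddf_sum /=.
apply: eq_bigr => mm _; rewrite !comp_mpolyZ comp_mpolyX rmorph_prod comp_mpolyX.
by congr (_ *: _); apply: eq_bigr => i _; rewrite rmorphXn tnth_mktuple.
Qed.

Lemma msym_mPoX n (s : 'S_n) (p : {mpoly R[n]}) :
  msym s p = p \mPo [tuple 'X_(s i) | i < n].
Proof.
rewrite -[msym s p]comp_mpoly_id msym_mPo.
by congr comp_mpoly; apply: eq_from_tnth => i; rewrite !tnth_mktuple.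
Qed.

Lemma msymXU n (s : 'S_n) (i : 'I_n) : msym s ('X_i : {mpoly R[n]}) = 'X_(s i).
Proof. by rewrite msym_mPoX comp_mpolyXU -tnth_nth tnth_mktuple. Qed.

Lemma msym_comp_mpoly n k (s : 'S_k) (p : {mpoly R[n]}) (t : n.-tuple {mpoly R[k]}) :
  msym s (p \mPo t) = p \mPo [tuple msym s (tnth t i) | i < n].
Proof.
rewrite msym_mPoX comp_mpolyA; congr comp_mpoly.
by apply: eq_from_tnth => i; rewrite !tnth_mktuple msym_mPoX.
Qed.

Lemma meval_msym n (s : 'S_n) (p : {mpoly R[n]}) (v : 'I_n -> R) :
  (msym s p).@[v] = p.@[v \o s].
Proof.
rewrite msym_mPoX comp_mpoly_meval; apply: meval_eq => i.
by rewrite tnth_mktuple mevalXU.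
Qed.

End MPolyComp.

Lemma sum_natr_eq (R : pzSemiRingType) (I : finType) (P : pred I) (a : I) :
  \sum_(i | P i) ((i == a)%:R : R) = (P a)%:R.
Proof.
rewrite big_mkcond (bigD1 a) //= eqxx big1 => [|i /negbTE->]; last by case: (P i).
by case: (P a); rewrite addr0.
Qed.

Lemma sum_mul_natr_eq (R : pzSemiRingType) (I : finType) (F : I -> R) (a : I) :
  \sum_i F i * (a == i)%:R = F a.
Proof.
rewrite (bigD1 a) //= eqxx mulr1 big1 ?addr0 // => i i_neq_a.
by rewrite eq_sym (negbTE i_neq_a) mulr0.
Qed.

Section WreathStabilizer.
Variables m n : nat.
Hypothesis m_gt0 : (0 < m)%N.
Hypothesis m_dvd_n : (m %| n)%N.

Definition modm (k : nat) : 'I_m := Ordinal (ltn_pmod k m_gt0).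

Definition lifts (s : 'S_n) (sig : 'S_m) := forall k : 'I_n, modm (s k) = sig (modm k).

Local Notation Yt := (mktuple (fun i : 'I_m => @Y m n i)).

Lemma msym_Y s sig : lifts s sig -> forall r, msym s (Y n r) = Y n (sig r).
Proof.
move=> s_sig r; rewrite /Y raddf_sum /=.
under eq_bigr do rewrite msymXU.
rewrite (reindex_inj (@perm_inj _ s^-1)) /=.
apply: eq_big => [k | k _]; last by rewrite permKV.
have /(congr1 val) /= := s_sig (s^-1 k)%g; rewrite permKV => ->.
by rewrite (inj_eq val_inj) (inj_eq perm_inj).
Qed.

Lemma msym_PsiY s sig : lifts s sig ->
  msym s (PsiY m n) = msym sig (Psi m) \mPo Yt.
Proof.
move=> s_sig; rewrite msym_mPo msym_comp_mpoly; congr comp_mpoly.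
by apply: eq_from_tnth => i; rewrite !tnth_mktuple (msym_Y s_sig).
Qed.

(* Substituting X_k |-> X_k for k < m and X_k |-> 0 otherwise undoes X_i |-> Y_i. *)
Lemma comp_mpoly_Y_inj : (m <= n)%N -> injective (comp_mpoly Yt).
Proof.
move=> m_le_n P Q PQ.
pose Z : n.-tuple {mpoly algC[m]} :=
  [tuple if (i < m)%N then 'X_(modm i) else 0 | i < n].
have YZ r : Y n r \mPo Z = 'X_r.
  rewrite /Y raddf_sum /= (bigD1 (widen_ord m_le_n r)) /=; last by rewrite modn_small.
  rewrite comp_mpolyXU -tnth_nth tnth_mktuple /= ltn_ord big1 ?addr0.
    by congr 'X_(_); apply: val_inj; rewrite /= modn_small.
  move=> k /andP[k_mod k_neq]; rewrite comp_mpolyXU -tnth_nth tnth_mktuple.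
  case: ifP => // k_lt_m; move: k_mod k_neq; rewrite modn_small // => /eqP k_r.
  by case/eqP; apply: val_inj.
have YZ_id : [tuple tnth Yt i \mPo Z | i < m] = [tuple 'X_i | i < m].
  by apply: eq_from_tnth => i; rewrite !tnth_mktuple YZ.
by rewrite -(comp_mpoly_id P) -(comp_mpoly_id Q) -YZ_id -!comp_mpolyA PQ.
Qed.

Lemma meval_PsiY_diff (k k' : 'I_n) :
  (PsiY m n).@[fun i => (i == k')%:R - (i == k)%:R] =
  \prod_(i < m | coprime i m) (eps m ^+ (i * modm k') - eps m ^+ (i * modm k)).
Proof.
rewrite comp_mpoly_meval rmorph_prod; apply: eq_bigr => i _.
rewrite rmorph_sum /=.
under eq_bigr => j _ do
  rewrite mevalZ mevalXU tnth_mktuple /Y rmorph_sum /=.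
under eq_bigr => j _ do under eq_bigr do rewrite mevalXU.
under eq_bigr do rewrite sumrB !sum_natr_eq mulrBr.
by rewrite sumrB (sum_mul_natr_eq _ (modm k')) (sum_mul_natr_eq _ (modm k)).
Qed.

Lemma stab_PsiY_eqmod s : msym s (PsiY m n) = PsiY m n ->
  forall k k' : 'I_n, (s k == s k' %[mod m]) = (k == k' %[mod m]).
Proof.
move=> s_stab k k'.
have : (PsiY m n).@[fun i => (i == s k')%:R - (i == s k)%:R] =
       (PsiY m n).@[fun i => (i == k')%:R - (i == k)%:R].
  rewrite -{1}s_stab meval_msym; apply: meval_eq => i /=.
  by rewrite !(inj_eq perm_inj).
have eqmodE (x y : 'I_n) : (x == y %[mod m]) =
    (\prod_(i < m | coprime i m) (eps m ^+ (i * modm x) - eps m ^+ (i * modm y)) == 0).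
  by rewrite prod_prim_root_diff_eq0 ?prim_root_eps //= !modn_mod.
rewrite !meval_PsiY_diff => e.
by rewrite eq_sym [RHS]eq_sym !eqmodE e.
Qed.

Lemma stab_PsiY_lift s : (m <= n)%N -> msym s (PsiY m n) = PsiY m n ->
  exists sig, lifts s sig.
Proof.
move=> m_le_n /stab_PsiY_eqmod s_eqmod.
pose sigf (r : 'I_m) := modm (s (widen_ord m_le_n r)).
have sigf_inj : injective sigf.
  move=> r r' /(congr1 val) /eqP /=; rewrite s_eqmod /= !modn_small // => /eqP.
  exact: val_inj.
exists (perm sigf_inj) => k; rewrite permE; apply: val_inj => /=.
by apply/eqP; rewrite s_eqmod /= modn_mod.
Qed.

Lemma mem_Stab_PsiY s sig : (m <= n)%N -> lifts s sig ->
  (s \in Stab (PsiY m n)) = (sig \in Stab (Psi m)).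
Proof.
move=> m_le_n s_sig; rewrite !inE (msym_PsiY s_sig).
by rewrite -(inj_eq (comp_mpoly_Y_inj m_le_n)).
Qed.

Lemma ltn_wreath_index (i : 'I_m) (j : 'I_(n %/ m)) : (i + m * j < n)%N.
Proof.
apply: (leq_trans (n := m * j.+1)); first by rewrite mulnS ltn_add2r.
rewrite -[X in (_ <= X)%N](divnK m_dvd_n) [X in (_ <= X)%N]mulnC.
by rewrite leq_mul2l ltn_ord orbT.
Qed.

Definition wreath_index i j : 'I_n := Ordinal (ltn_wreath_index i j).

Lemma modm_wreath_index i j : modm (wreath_index i j) = i.
Proof. by apply: val_inj; rewrite /= addnC mulnC modnMDl modn_small. Qed.

Lemma ltn_divm (k : 'I_n) : (k %/ m < n %/ m)%N.
Proof. by rewrite ltn_divLR // divnK. Qed.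

Lemma wreathP (G : {set 'S_m}) s :
  reflect (exists2 sig, sig \in G & lifts s sig) (s \in @wreath m n G).
Proof.
rewrite inE; apply: (iffP existsP) =>
    [[sig /existsP[tau /andP[sig_G /forallP s_wr]]] | [sig sig_G s_sig]].
  exists sig => // k; apply: val_inj.
  have /forallP /(_ (Ordinal (ltn_divm k))) /forallP /(_ k) /implyP := s_wr (modm k).
  rewrite /= {1}(divn_eq k m) addnC mulnC eqxx => /(_ isT) /eqP ->.
  by rewrite addnC mulnC modnMDl modn_small.
have divm_inj i : injective (fun j => Ordinal (ltn_divm (s (wreath_index i j)))).
  move=> j j' /(congr1 val) /= s_div.
  have s_mod j0 : (s (wreath_index i j0) %% m)%N = sig i.
    by rewrite -[LHS]/(val (modm _)) s_sig modm_wreath_index.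
  have /perm_inj /(congr1 val) /= /eqP : s (wreath_index i j) = s (wreath_index i j').
    by apply: val_inj; rewrite /= (divn_eq (s _) m) s_div s_mod -(s_mod j') -divn_eq.
  by rewrite eqn_add2l eqn_mul2l eqn0Ngt m_gt0 => /eqP /val_inj.
exists sig; apply/existsP; exists [ffun i => perm (divm_inj i)]; rewrite sig_G /=.
apply/forallP => i; apply/forallP => j; apply/forallP => k; apply/implyP => /eqP k_ij.
have -> : k = wreath_index i j by apply: val_inj.
rewrite ffunE permE /= {1}(divn_eq (s _) m) addnC mulnC.
by rewrite -[(_ %% m)%N]/(val (modm _)) s_sig modm_wreath_index.
Qed.

End WreathStabilizer.

Theorem lemma2p2 (m n : nat) :
  (0 < m)%N -> (m %| n)%N ->
  Stab (PsiY m n) = @wreath m n (Stab (Psi m)).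
Proof.
move=> m_gt0 m_dvd_n; apply/setP => s.
have [n0 | n_gt0] := posnP n.
  subst n; have -> : s = 1%g by apply/permP => -[].
  rewrite inE msym1m eqxx; symmetry; apply/(wreathP m_gt0 m_dvd_n).
  by exists 1%g => [|[]]; rewrite // inE msym1m.
have m_le_n := dvdn_leq n_gt0 m_dvd_n.
apply/idP/(wreathP m_gt0 m_dvd_n) => [s_stab | [sig sig_stab s_sig]].
  move: (s_stab); rewrite inE => /eqP /(stab_PsiY_lift m_gt0 m_le_n) [sig s_sig].
  by exists sig => //; rewrite -(mem_Stab_PsiY m_le_n s_sig).
by rewrite (mem_Stab_PsiY m_le_n s_sig).
Qed.
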